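(* For all $0\le i\le r$ and all $\beta\in\Gamma_{i-1}$, the following identity of rational functions holds: $\pi_{i+1}^{\beta}/\pi_i^{\beta}=Y_i^{L_i(\beta)}$ (here $L_i(\beta)\in\mathbb Z$).
   Context: Let $(K,v)$ be a valued field with non-trivial value group $\Gamma$; $\Gamma_{\mathbb Q}=\Gamma\otimes\mathbb Q$. Let $\phi_0,\dots,\phi_r\in K[x]$ be the key polynomials and $\gamma_0,\dots,\gamma_r\in\Gamma_{\mathbb Q}$ the values of a MacLane chain $\mu_{-\infty}\xrightarrow{\phi_0,\gamma_0}\mu_0\to\cdots\xrightarrow{\phi_r,\gamma_r}\mu_r$ of augmented valuations on $K[x]$. Put $\Gamma_{\mu_{-1}}=\Gamma$; then $\Gamma_{\mu_i}=\langle\Gamma_{\mu_{i-1}},\gamma_i\rangle$, $e_i=(\Gamma_{\mu_i}:\Gamma_{\mu_{i-1}})<\infty$, $h_i=e_i\gamma_i\in\Gamma_{\mu_{i-1}}$. Fix a finitely generated $\Gamma_{-1}\subseteq\Gamma$ with $h_i\in\Gamma_{-1}+\langle\gamma_0,\dots,\gamma_{i-1}\rangle$ for all $i$; $\Gamma_i=\langle\Gamma_{-1},\gamma_0,\dots,\gamma_i\rangle$ (free of common rank $n$, $h_i\in\Gamma_{i-1}$). Fix a $\mathbb Z$-basis $\iota_{0,1},\dots,\iota_{0,n}$ of $\Gamma_{-1}$; recursively, given the basis $\iota_{i,\cdot}$ of $\Gamma_{i-1}$, write $\gamma_i=\sum_j(h_{i,j}/e_{i,j})\iota_{i,j}$ (coprime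 integers, $e_{i,j}>0$), $e'_{i,1}=d_{i,1}=1$, $e'_{i,j}=e_{i,1}\cdots e_{i,j-1}/(d_{i,1}\cdots d_{i,j-1})$, $d_{i,j}=\gcd(e_{i,j},e'_{i,j})$ ($j>1$); let $\ell_{i,j},\ell'_{i,j}$ be the integers with $\ell_{i,j}h_{i,j}e'_{i,j}+\ell'_{i,j}e_{i,j}=d_{i,j}$, $0\le\ell_{i,j}<e_{i,j}/d_{i,j}$; $(\iota_{i+1,1}\cdots\iota_{i+1,n})=(\iota_{i,1}\cdots\iota_{i,n})Q_i$, $Q_i$ lower triangular with diagonal $d_{i,j}/e_{i,j}$ and $(m,j)$-entry $\ell_{i,j}e'_{i,j}h_{i,m}/e_{i,m}$ ($m>j$), a basis of $\Gamma_i$. Choose $\pi_{0,j}\in K^*$ with $v(\pi_{0,j})=\iota_{0,j}$; for $0\le i\le r$, $\pi_{i+1,j}=\big(\phi_i\pi_{i,1}^{-h_{i,1}/e_{i,1}}\cdots\pi_{i,j-1}^{-h_{i,j-1}/e_{i,j-1}}\big)^{\ell_{i,j}e'_{i,j}}\pi_{i,j}^{\ell'_{i,j}}$ (integer exponents). For $0\le i\le r+1$ and $\alpha=\sum_jn_j\iota_{i,j}\in\Gamma_{i-1}$ ($n_j\in\mathbb Z$), $\pi_i^\alpha=\prod_j\pi_{i,j}^{n_j}$ (note $\Gamma_{i-1}\subseteq\Gamma_i$, so $\pi_{i+1}^\beta$ is defined for $\beta\in\Gamma_{i-1}$); $Y_i=\phi_i^{e_i}\pi_i^{-h_i}$. Let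 $L_{i,j}=\ell_{i,j}\ell'_{i,j+1}\cdots\ell'_{i,n}$ and let $L_i\colon\Gamma_{i-1}\otimes\mathbb Q\to\mathbb Q$ be the $\mathbb Q$-linear map with $L_i(\iota_{i,j})=L_{i,j}$. *)

From HB Require Import structures.
From mathcomp Require Import all_boot all_order all_algebra.
Set Implicit Arguments. Unset Strict Implicit. Unset Printing Implicit Defensive.
Import Order.TTheory GRing.Theory Num.Theory.
Local Open Scope ring_scope.
From mathcomp Require Import fraction.
Definition toK (K : fieldType) (p : {poly K}) : {fraction {poly K}} := @FracField.tofrac _ p.

(* Throughout, vectors of Gamma_{-1} (x) Q are written in coordinates w.r.t.
   the fixed Z-basis iota_{0,1..n} of Gamma_{-1} (columns 'cV[rat]_n).
   Indices j are 0-based ('I_n) instead of 1..n. *)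

(* ---- integer data attached to c = coordinates of gamma_i in the basis iota_{i,.} ---- *)
Definition hcoef n (c : 'cV[rat]_n) (j : 'I_n) : int := numq (c j 0).
Definition ecoef n (c : 'cV[rat]_n) (j : 'I_n) : int := denq (c j 0).
Definition ecn n (c : 'cV[rat]_n) (k : nat) : int :=
  if @insub nat (fun k => (k < n)%N) 'I_n k is Some j then denq (c j 0) else 1.
(* e'_{j} = prod_{k<j} e_k / prod_{k<j} d_k, computed as prod_{k<j} (e_k / d_k),
   with d_k = gcd(e_k, e'_k)  (d_1 = gcd(e_1,1) = 1, e'_1 = 1). *)
Fixpoint eprime n (c : 'cV[rat]_n) (k : nat) : int :=
  match k with
  | 0 => 1
  | k'.+1 => eprime c k' * ((ecn c k') %/ (gcdz (ecn c k') (eprime c k')))%Z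
  end.
Definition epcoef n (c : 'cV[rat]_n) (j : 'I_n) : int := eprime c j.
Definition dcoef n (c : 'cV[rat]_n) (j : 'I_n) : int := gcdz (ecoef c j) (epcoef c j).
(* ell_{i,j}: the integer 0 <= ell < e/d with ell*h*e' = d (mod e) *)
Definition ellcoef n (c : 'cV[rat]_n) (j : 'I_n) : int :=
  let h := hcoef c j in let e := ecoef c j in
  let e' := epcoef c j in let d := dcoef c j in
  (find (fun k : nat => (e %| k%:Z * h * e' - d)%Z) (iota 0 `|(e %/ d)%Z|))%:Z.
(* ell'_{i,j} determined by ell*h*e' + ell'*e = d *)
Definition ellpcoef n (c : 'cV[rat]_n) (j : 'I_n) : int :=
  ((dcoef c j - ellcoef c j * hcoef c j * epcoef c j) %/ ecoef c j)%Z.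

Definition Qmat n (c : 'cV[rat]_n) : 'M[rat]_n :=
  \matrix_(m, j)
    if m == j then (dcoef c j)%:~R / (ecoef c j)%:~R
    else if (j < m)%N then
      (ellcoef c j * epcoef c j)%:~R * (hcoef c m)%:~R / (ecoef c m)%:~R
    else 0.

(* Cmat g i : column j = coordinates (w.r.t. iota_0) of iota_{i,j};
   (iota_{i+1,.}) = (iota_{i,.}) Q_i. *)
Fixpoint Cmat n (g : nat -> 'cV[rat]_n) (i : nat) : 'M[rat]_n :=
  match i with
  | 0 => 1%:M
  | i'.+1 => Cmat g i' *m Qmat (invmx (Cmat g i') *m g i')
  end.
(* coordinates of gamma_i in the basis iota_{i,.} *)
Definition gcoord n (g : nat -> 'cV[rat]_n) (i : nat) : 'cV[rat]_n :=
  invmx (Cmat g i) *m g i.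

Fixpoint piv (K : fieldType) n (g : nat -> 'cV[rat]_n) (phi : nat -> {poly K})
    (pi0 : 'I_n -> K) (i : nat) : 'I_n -> {fraction {poly K}} :=
  match i with
  | 0 => fun j => toK (pi0 j)%:P
  | i'.+1 =>
      let c := gcoord g i' in
      let p := piv g phi pi0 i' in
      fun j =>
        toK (phi i') ^ (ellcoef c j * epcoef c j)
        * (\prod_(k < n | (k < j)%N)
             p k ^ (- ((hcoef c k * ellcoef c j * epcoef c j) %/ ecoef c k)%Z))
        * p j ^ (ellpcoef c j)
  end.

(* pi^alpha = prod_j p_j^{a_j}, where a = (integral) coordinates of alpha in the basis
   attached to p *)
Definition piexp (K : fieldType) n (p : 'I_n -> {fraction {poly K}}) (a : 'cV[rat]_n)
  : {fraction {poly K}} := \prod_j p j ^ numq (a j 0).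

(* pi_i^beta, beta given by its coordinates w.r.t. iota_0 *)
Definition piPow (K : fieldType) n g phi (pi0 : 'I_n -> K) (i : nat) (beta : 'cV[rat]_n) :=
  piexp (piv g phi pi0 i) (invmx (Cmat g i) *m beta).

(* Y_i = phi_i^{e_i} pi_i^{-h_i}, h_i = e_i gamma_i *)
Definition Yi (K : fieldType) n g phi (pi0 : 'I_n -> K) (e : nat -> nat) (i : nat) :=
  toK (phi i) ^+ e i * piPow g phi pi0 i (- ((e i)%:R *: g i)).

(* L_{i,j} = ell_{i,j} ell'_{i,j+1} ... ell'_{i,n};  L_i(beta) (rational a priori) *)
Definition Lcoef n (c : 'cV[rat]_n) (j : 'I_n) : int :=
  ellcoef c j * \prod_(k < n | (j < k)%N) ellpcoef c k.
Definition Lval n (g : nat -> 'cV[rat]_n) (i : nat) (beta : 'cV[rat]_n) : rat :=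
  \sum_j (invmx (Cmat g i) *m beta) j 0 * (Lcoef (gcoord g i) j)%:~R.

(* membership in Gamma_{mu_{i-1}} = < Gamma, gamma_0, ..., gamma_{i-1} > *)
Definition inGammaMu (V : lmodType rat) (Gam : {pred V}) (gam : nat -> V) (i : nat) (x : V) :=
  exists2 y, y \in Gam & exists b : nat -> int, x = y + \sum_(k < i) gam k *~ b k.

From HB Require Import structures.
From mathcomp Require Import all_boot all_order all_algebra.
Import Order.TTheory GRing.Theory Num.Theory.
Local Open Scope ring_scope.
From mathcomp Require Import fraction.
From mathcomp Require Import zify ring.

Set Implicit Arguments.
Unset Strict Implicit.

(* Fix a level i and let c be the coordinates of gamma_i in the basis iota_{i,.}.
   The integers h_j, e_j, e'_j, d_j, l_j, l'_j are arithmetic of the single column c: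
   e'_j is the lcm of e_1 .. e_{j-1} and l_j h_j e'_j + l'_j e_j = d_j (Bezout).
   With w_j = l_j e'_j the matrix Q = Q_i satisfies
     (a) Q^{-1} and Q^{-1} c are integral, and Q Z^n lies in Z^n + Z c, so that
         iota_{i+1,.} is a Z-basis of Gamma_{i-1} + Z gamma_i;
     (b) sum_m L_m Q_{mj} = w_j / e'_n, by a telescoping sum;
     (c) Q_{kj} = M_{kj} + w_j c_k, where pi_{i+1,j} = phi_i^{w_j} prod_k pi_{i,k}^{M_{kj}}
         (M = pivexp).
   By (a) and induction on i the coordinates x of beta in iota_{i,.} are integral,
   and the order e_i of gamma_i modulo Gamma_{mu_{i-1}} equals e'_n.  For the
   coordinates y = Q^{-1} x of beta in iota_{i+1,.}, (b) and (c) give the exponents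
   e_i L and -e_i c_k L of phi_i and pi_{i,k} in pi_{i+1}^beta / pi_i^beta, where
   L = sum_m x_m L_m = L_i(beta); these are the exponents of Y_i^L. *)

Lemma bezout_residue (a e d : int) : 0 < e -> 0 < d -> gcdz a e = d ->
  exists2 k : nat, (k < `|(e %/ d)%Z|)%N & (e %| k%:Z * a - d)%Z.
Proof.
move=> e_gt0 d_gt0 gcd_d.
have [u [v huv]] := Bezoutz a e; rewrite gcd_d in huv.
have [A aA] : exists A, a = A * d.
  by exists (a %/ d)%Z; rewrite divzK // -gcd_d dvdz_gcdl.
have [D eD] : exists D, e = D * d.
  by exists (e %/ d)%Z; rewrite divzK // -gcd_d dvdz_gcdr.
have D_gt0 : 0 < D by move: e_gt0 d_gt0; rewrite eD; nia.
have eDd : (e %/ d)%Z = D by rewrite eD mulzK // gt_eqF.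
have k_ge0 : 0 <= (u %% D)%Z by rewrite modz_ge0 // gt_eqF.
exists `|(u %% D)%Z|%N; first by rewrite eDd; have := ltz_pmod u D_gt0; lia.
rewrite gez0_abs //; apply/dvdzP; exists (- (v + (u %/ D)%Z * A)).
have -> : (u %% D)%Z = u - (u %/ D)%Z * D by rewrite {2}(divz_eq u D); ring.
by rewrite -[X in _ - X]huv aA eD; ring.
Qed.

Section ColumnArithmetic.
Variables (n : nat) (c : 'cV[rat]_n).

Fixpoint lcm_den (k : nat) : nat :=
  if k is k'.+1 then lcmn (lcm_den k') `|ecn c k'|%N else 1%N.

Lemma ecn_gt0 k : 0 < ecn c k.
Proof. by rewrite /ecn; case: insub => [j|] //; exact: denq_gt0. Qed.

Lemma ecn_ord (j : 'I_n) : ecn c j = ecoef c j.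
Proof. by rewrite /ecn valK. Qed.

Lemma abs_ecn k : (`|ecn c k|%N)%:Z = ecn c k.
Proof. by rewrite gez0_abs // ltW // ecn_gt0. Qed.

Lemma lcm_den_gt0 k : (0 < lcm_den k)%N.
Proof. by elim: k => //= k IH; rewrite lcmn_gt0 IH -ltz_nat abs_ecn ecn_gt0. Qed.

Lemma eprime_lcm k : eprime c k = (lcm_den k)%:Z.
Proof.
elim: k => //= k IH.
rewrite IH -abs_ecn /gcdz !absz_nat divz_nat -PoszM /lcmn.
by rewrite muln_divA ?dvdn_gcdl // gcdnC.
Qed.

Lemma dvdn_lcm_den m k : (m < k)%N -> (`|ecn c m| %| lcm_den k)%N.
Proof.
elim: k => // k IH; rewrite ltnS leq_eqVlt => /orP[/eqP->|/IH H] /=.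
  exact: dvdn_lcmr.
exact: dvdn_trans H (dvdn_lcml _ _).
Qed.

Lemma lcm_den_min k M :
  (forall m, (m < k)%N -> (`|ecn c m| %| M)%N) -> (lcm_den k %| M)%N.
Proof.
elim: k => [|k IH] H /=; first exact: dvd1n.
by rewrite dvdn_lcm H // andbT IH // => m Hm; apply: H; exact: ltnW.
Qed.

Lemma ecoef_gt0 j : 0 < ecoef c j.
Proof. exact: denq_gt0. Qed.

Lemma eprime_gt0 k : 0 < eprime c k.
Proof. by rewrite eprime_lcm ltz_nat lcm_den_gt0. Qed.

Lemma dcoef_gt0 j : 0 < dcoef c j.
Proof.
by rewrite /dcoef /gcdz ltz_nat gcdn_gt0 absz_gt0 gt_eqF // ecoef_gt0.
Qed.

Lemma dcoef_dvd_ecoef j : (dcoef c j %| ecoef c j)%Z.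
Proof. exact: dvdz_gcdl. Qed.

Lemma dcoef_dvd_epcoef j : (dcoef c j %| epcoef c j)%Z.
Proof. exact: dvdz_gcdr. Qed.

Lemma eprimeS (j : 'I_n) : eprime c j.+1 * dcoef c j = eprime c j * ecoef c j.
Proof. by rewrite /= ecn_ord -mulrA divzK // dcoef_dvd_ecoef. Qed.

Lemma ecoef_dvd_eprime (m : 'I_n) k : (m < k)%N -> (ecoef c m %| eprime c k)%Z.
Proof. by move=> hmk; rewrite eprime_lcm -ecn_ord -abs_ecn; exact: dvdn_lcm_den. Qed.

(* l_j is well defined: since gcd(h_j e'_j, e_j) = d_j, the search interval
   [0, e_j/d_j) contains a solution of  l h_j e'_j = d_j (mod e_j). *)
Lemma ellcoef_spec j :
  (ecoef c j %| ellcoef c j * hcoef c j * epcoef c j - dcoef c j)%Z.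
Proof.
have gcd_d : gcdz (hcoef c j * epcoef c j) (ecoef c j) = dcoef c j.
  rewrite gcdzC Gauss_gcdzr // /coprimez gcdzC.
  by have := coprime_num_den (c j 0); rewrite /coprime.
have [k k_lt k_sol] := bezout_residue (ecoef_gt0 j) (dcoef_gt0 j) gcd_d.
set P := fun k : nat => (ecoef c j %| k%:Z * hcoef c j * epcoef c j - dcoef c j)%Z.
have has_P : has P (iota 0 `|(ecoef c j %/ dcoef c j)%Z|).
  by apply/hasP; exists k; rewrite ?mem_iota // /P -mulrA.
rewrite /ellcoef -/P; have := nth_find 0%N has_P; rewrite nth_iota ?add0n //.
by move: has_P; rewrite has_find size_iota.
Qed.

Lemma ell_bezout j :
  ellcoef c j * hcoef c j * epcoef c j + ellpcoef c j * ecoef c j = dcoef c j.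
Proof. by rewrite /ellpcoef divzK; [ring | rewrite -rpredN opprB ellcoef_spec]. Qed.

End ColumnArithmetic.

Lemma intr_divz (R : numFieldType) (a b : int) :
  (b %| a)%Z -> ((a %/ b)%Z%:~R : R) = a%:~R / b%:~R.
Proof.
have [->|hb] := eqVneq b 0; first by rewrite divz0 invr0 mulr0.
move=> hab; apply: (canRL (mulfK _)); first by rewrite intr_eq0.
by rewrite -rmorphM /= divzK.
Qed.

Lemma int_mxD p q (M N : 'M[rat]_(p, q)) :
  M \is a mxOver Num.int -> N \is a mxOver Num.int -> M + N \is a mxOver Num.int.
Proof. by move=> /mxOverP hM /mxOverP hN; apply/mxOverP => x y; rewrite mxE rpredD. Qed.

Lemma int_mxMz p q (M : 'M[rat]_(p, q)) (b : int) :
  M \is a mxOver Num.int -> M *~ b \is a mxOver Num.int.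
Proof. by move=> /mxOverP hM; apply/mxOverP => x y; rewrite -scaler_int mxE rpredM ?intr_int. Qed.

Section ColumnIdentities.
Variables (n : nat) (c : 'cV[rat]_n).
Local Notation w j := (((ellcoef c j * epcoef c j)%:~R : rat)).

Lemma coefE j : c j 0 = (hcoef c j)%:~R / (ecoef c j)%:~R.
Proof. by rewrite divq_num_den. Qed.

Lemma QmatE m j : Qmat c m j = if m == j then (dcoef c j)%:~R / (ecoef c j)%:~R
                               else if (j < m)%N then w j * c m 0 else 0.
Proof. by rewrite mxE coefE mulrA. Qed.

Lemma ecoefR_neq0 j : ((ecoef c j)%:~R : rat) != 0.
Proof. by rewrite intr_eq0 gt_eqF // ecoef_gt0. Qed.

Lemma dcoefR_neq0 j : ((dcoef c j)%:~R : rat) != 0.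
Proof. by rewrite intr_eq0 gt_eqF // dcoef_gt0. Qed.

Lemma eprimeR_neq0 k : ((eprime c k)%:~R : rat) != 0.
Proof. by rewrite intr_eq0 gt_eqF // eprime_gt0. Qed.

Lemma diag_bezout j :
  w j * c j 0 + (ellpcoef c j)%:~R = (dcoef c j)%:~R / (ecoef c j)%:~R.
Proof.
have := ecoefR_neq0 j; rewrite coefE -(ell_bezout c j) /epcoef => he.
by rewrite !(rmorphD, rmorphM) /=; field.
Qed.

Lemma eprimeSR (j : 'I_n) : ((eprime c j.+1)%:~R : rat) =
   (eprime c j)%:~R * (ecoef c j)%:~R / (dcoef c j)%:~R.
Proof. by apply: (canRL (mulfK (dcoefR_neq0 j))); rewrite -!rmorphM /= eprimeS. Qed.

Lemma below_diag_int (m j : 'I_n) : (m < j)%N -> w j * c m 0 \is a Num.int.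
Proof.
move=> hmj; rewrite coefE mulrA -rmorphM /=.
by apply: Qint_dvdz; apply/dvdz_mulr/dvdz_mull; exact: ecoef_dvd_eprime.
Qed.

End ColumnIdentities.

(* (a): the lattice Q Z^n contains Z^n and c, so Q is invertible over Z and
   Q^{-1} c is integral. *)
Section QmatLattice.
Variables (n : nat) (c : 'cV[rat]_n).
Local Notation Q := (Qmat c).

(* the lattice spanned by the columns of Q, i.e. by the iota_{i+1,j} *)
Definition Qlattice (v : 'cV[rat]_n) :=
  exists2 u : 'cV[rat]_n, u \is a mxOver Num.int & v = Q *m u.

Lemma Qlattice0 : Qlattice 0.
Proof. by exists 0; rewrite ?mulmx0 // mxOver0 // rpred0. Qed.

Lemma QlatticeD u v : Qlattice u -> Qlattice v -> Qlattice (u + v).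
Proof. by move=> [a ha ->] [b hb ->]; exists (a + b); rewrite ?int_mxD ?mulmxDr. Qed.

Lemma QlatticeZ a v : a \is a Num.int -> Qlattice v -> Qlattice (a *: v).
Proof. by move=> ha [b hb ->]; exists (a *: b); [exact: mxOverZ | rewrite scalemxAr]. Qed.

Lemma Qlattice_col j : Qlattice (col j Q).
Proof.
exists (delta_mx j 0); last exact: colE.
by apply/mxOverP => x y; rewrite mxE; case: (_ && _).
Qed.

Definition tail k : 'cV[rat]_n := \col_m (if (k <= m)%N then c m 0 else 0).

Lemma tail_ge k : (n <= k)%N -> tail k = 0.
Proof.
move=> hnk; apply/matrixP => m i; rewrite !mxE.
by case: leqP => // /(leq_trans hnk); rewrite leqNgt ltn_ord.
Qed.

Lemma tail0 : tail 0 = c.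
Proof. by apply/matrixP => m i; rewrite !mxE (ord1 i). Qed.

Lemma tail_step (j : 'I_n) :
  (eprime c j)%:~R *: tail j =
   ((epcoef c j %/ dcoef c j)%Z * hcoef c j)%:~R *: col j Q
   + (ellpcoef c j)%:~R *: ((eprime c j.+1)%:~R *: tail j.+1).
Proof.
have hd := dcoefR_neq0 c j; have he := ecoefR_neq0 c j.
apply/matrixP => m i; rewrite (ord1 i) !mxE -[m == j]/(val m == val j).
rewrite eprimeSR rmorphM /= intr_divz ?dcoef_dvd_epcoef //.
case: (ltngtP m j) => [_|_|/val_inj ->]; first by rewrite !mulr0 addr0.
  rewrite !coefE /epcoef -(ell_bezout c j) /epcoef in hd *.
  by rewrite !(rmorphD, rmorphM) in hd *; field; rewrite ecoefR_neq0 hd.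
by rewrite !mulr0 addr0 coefE /epcoef; field; rewrite hd he.
Qed.

Lemma delta_step (j : 'I_n) :
  delta_mx j 0 = ((ecoef c j %/ dcoef c j)%Z%:~R) *: col j Q
                 - (ellcoef c j)%:~R *: ((eprime c j.+1)%:~R *: tail j.+1).
Proof.
have hd := dcoefR_neq0 c j; have he := ecoefR_neq0 c j.
apply/matrixP => m i; rewrite (ord1 i) !mxE eqxx andbT -[m == j]/(val m == val j).
rewrite eprimeSR intr_divz ?dcoef_dvd_ecoef //.
case: (ltngtP m j) => _; first by rewrite !mulr0 subr0.
  by rewrite mulr0n coefE /epcoef rmorphM; field; rewrite hd ecoefR_neq0.
by rewrite mulr1n !mulr0 subr0; field; rewrite hd he.
Qed.

Lemma Qlattice_tail k : Qlattice ((eprime c k)%:~R *: tail k).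
Proof.
have [t] := ubnP (n - k); elim: t k => // t IH k; rewrite ltnS => hnk.
have [hkn|hnk'] := leqP n k; first by rewrite tail_ge // scaler0; exact: Qlattice0.
rewrite -[k]/(val (Ordinal hnk')) tail_step.
apply: QlatticeD; apply: QlatticeZ; rewrite ?intr_int //; first exact: Qlattice_col.
by apply: IH; rewrite /=; lia.
Qed.

Lemma Qlattice_delta (j : 'I_n) : Qlattice (delta_mx j 0).
Proof.
rewrite delta_step -scaleNr; apply: QlatticeD; apply: QlatticeZ;
  rewrite ?rpredN ?intr_int //; [exact: Qlattice_col | exact: Qlattice_tail].
Qed.

Lemma Qlattice_coef : Qlattice c.
Proof. by have := Qlattice_tail 0; rewrite tail0 /= scale1r. Qed.

End QmatLattice.

Section QmatInverse.
Variables (n : nat) (c : 'cV[rat]_n).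
Local Notation Q := (Qmat c).
Local Notation w j := (((ellcoef c j * epcoef c j)%:~R : rat)).

(* the columns of U express the delta_j in the lattice Q Z^n *)
Lemma Qmat_int_right_inverse : exists2 U : 'M[rat]_n, U \is a mxOver Num.int & Q *m U = 1%:M.
Proof.
have [u hu hd] := fin_all_exists2 (Qlattice_delta c).
exists (\matrix_(a, b) u b a 0).
  by apply/mxOverP => a b; rewrite mxE; move/mxOverP: (hu b).
apply/matrixP => a b.
have := congr1 (fun M : 'cV[rat]_n => M a 0) (hd b); rewrite !mxE eqxx andbT => ->.
by apply: eq_bigr => k _; rewrite !mxE.
Qed.

Lemma Qmat_unit : Q \in unitmx.
Proof. by have [U _ /mulmx1_unit []] := Qmat_int_right_inverse. Qed.

Lemma invQ_int : invmx Q \is a mxOver Num.int.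
Proof.
have [U hU QU] := Qmat_int_right_inverse.
by rewrite -[invmx Q]mulmx1 -QU mulmxA mulVmx ?mul1mx // Qmat_unit.
Qed.

Lemma invQ_coef_int : invmx Q *m c \is a mxOver Num.int.
Proof. by have [u hu {2}->] := Qlattice_coef c; rewrite mulKmx // Qmat_unit. Qed.

Lemma Qmat_int_decomp (z : 'cV[rat]_n) : z \is a mxOver Num.int ->
  exists2 u : 'cV[rat]_n, u \is a mxOver Num.int & Q *m z = u + (\sum_j z j 0 * w j) *: c.
Proof.
move=> /mxOverP hz; exists (Q *m z - (\sum_j z j 0 * w j) *: c); last by rewrite subrK.
apply/mxOverP => m i; rewrite !mxE mulr_suml -sumrB; apply: rpred_sum => j _.
rewrite (ord1 i) mulrC -mulrA -mulrBr rpredM // QmatE.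
case: eqP => [->|hmj]; first by rewrite -(diag_bezout c j) addrC addKr intr_int.
case: (ltnP j m) => hjm; first by rewrite subrr rpred0.
rewrite sub0r rpredN below_diag_int //.
by rewrite ltn_neqAle hjm andbT; apply/eqP => h; apply: hmj; apply: val_inj.
Qed.

End QmatInverse.

(* Extension by 0 of a function on 'I_n to nat, to state telescoping sums. *)
Definition extN n (f : 'I_n -> rat) (k : nat) : rat :=
  if insub k is Some j then f j else 0.

Lemma extN_ord n (f : 'I_n -> rat) (j : 'I_n) : extN f j = f j.
Proof. by rewrite /extN valK. Qed.

Section LinearForm.
Variables (n : nat) (c : 'cV[rat]_n).
Local Notation Q := (Qmat c).
Local Notation w j := (((ellcoef c j * epcoef c j)%:~R : rat)).
Local Notation epR k := (((eprime c k)%:~R : rat)).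
Local Notation ellN := (extN (fun j => (ellcoef c j)%:~R)).
Local Notation ellpN := (extN (fun j => (ellpcoef c j)%:~R)).
Local Notation coefN := (extN (fun j => c j 0)).

Definition suffix_prod a : rat := \prod_(a <= k < n) ellpN k.

Lemma Lcoef_suffix (m : 'I_n) : ((Lcoef c m)%:~R : rat) = ellN m * suffix_prod m.+1.
Proof.
rewrite /Lcoef rmorphM rmorph_prod /= extN_ord /suffix_prod big_geq_mkord.
by congr (_ * _); apply: eq_big => [k|k _]; rewrite ?extN_ord.
Qed.

Lemma telescope_step m : (m < n)%N ->
  ellN m * coefN m * suffix_prod m.+1
  = suffix_prod m.+1 / epR m.+1 - suffix_prod m / epR m.
Proof.
move=> hm; set j := Ordinal hm.
have -> : suffix_prod m = ellpN m * suffix_prod m.+1 by rewrite /suffix_prod big_ltn.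
rewrite -[m]/(val j) !extN_ord eprimeSR.
have hd := dcoefR_neq0 c j; have he := ecoefR_neq0 c j; have hp := eprimeR_neq0 c j.
have -> : (ellpcoef c j)%:~R = (dcoef c j)%:~R / (ecoef c j)%:~R - w j * c j 0.
  by rewrite -(diag_bezout c j); ring.
by rewrite rmorphM /epcoef; field; rewrite hd he hp.
Qed.

Lemma suffix_sum a : (a <= n)%N ->
  \sum_(a <= m < n) ellN m * coefN m * suffix_prod m.+1
  = 1 / epR n - suffix_prod a / epR a.
Proof.
move=> han; rewrite (telescope_sumr_eq (fun k => suffix_prod k / epR k)) //.
  by rewrite /suffix_prod big_geq.
by move=> k /andP[_ hk]; exact: telescope_step.
Qed.

Lemma Lcoef_Qmat (j : 'I_n) : \sum_(m < n) (Lcoef c m)%:~R * Q m j = w j / epR n.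
Proof.
have split_sum : \sum_(m < n) (Lcoef c m)%:~R * Q m j =
   \sum_(m < n) (if m == j then (Lcoef c j)%:~R * ((dcoef c j)%:~R / (ecoef c j)%:~R) else 0)
 + \sum_(m < n) (if (j < m)%N then w j * ((Lcoef c m)%:~R * c m 0) else 0).
  rewrite -big_split /=; apply: eq_bigr => m _; rewrite QmatE.
  case: eqP => [->|_]; first by rewrite ltnn addr0.
  by case: ifP => _; [ring | rewrite mulr0 addr0].
have tail_sum : \sum_(m < n | (j < m)%N) (Lcoef c m)%:~R * c m 0 =
                \sum_(j.+1 <= k < n) ellN k * coefN k * suffix_prod k.+1.
  rewrite big_geq_mkord; apply: eq_big => [k|k _] //.
  by rewrite Lcoef_suffix !extN_ord; ring.
rewrite split_sum -big_mkcond big_pred1_eq -big_mkcond /= -mulr_sumr tail_sum.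
rewrite suffix_sum // Lcoef_suffix extN_ord eprimeSR rmorphM /epcoef.
have hd := dcoefR_neq0 c j; have he := ecoefR_neq0 c j; have hp := eprimeR_neq0 c j.
by field; rewrite hd he hp eprimeR_neq0.
Qed.

(* L(x) = sum_j x_j L_j, so that L_i(beta) = L(x) for x the coordinates of beta *)
Definition Lform (x : 'cV[rat]_n) : rat := \sum_j x j 0 * (Lcoef c j)%:~R.

Lemma Lform_int (x : 'cV[rat]_n) : x \is a mxOver Num.int -> Lform x \is a Num.int.
Proof. by move=> /mxOverP x_int; apply: rpred_sum => j _; rewrite rpredM ?intr_int. Qed.

(* exponent of phi_i in pi_{i+1}^beta:  sum_j w_j y_j = e'_n L(Q y) *)
Lemma weight_sum_Lform (y : 'cV[rat]_n) :
  \sum_j w j * y j 0 = epR n * Lform (Q *m y).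
Proof.
have -> : Lform (Q *m y) = \sum_j y j 0 * (\sum_m (Lcoef c m)%:~R * Q m j).
  rewrite /Lform; under eq_bigr => m _ do rewrite mxE mulr_suml.
  rewrite exchange_big /=; apply: eq_bigr => j _; rewrite mulr_sumr.
  by apply: eq_bigr => m _; ring.
under [in RHS]eq_bigr => j _ do rewrite Lcoef_Qmat.
rewrite mulr_sumr; apply: eq_bigr => j _.
by field; exact: eprimeR_neq0.
Qed.

(* exponent of pi_{i,k} in pi_{i+1,j} *)
Definition pivexp (k j : 'I_n) : int :=
  if (k < j)%N then - ((hcoef c k * ellcoef c j * epcoef c j) %/ ecoef c k)%Z
  else if k == j then ellpcoef c j else 0.

(* (c): Q_{kj} = pivexp_{kj} + w_j c_k, hence the exponent of pi_{i,k} in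
   pi_{i+1}^beta / pi_i^beta is  -c_k sum_j w_j y_j *)
Lemma exponent_defect (y : 'cV[rat]_n) k :
  \sum_j (pivexp k j)%:~R * y j 0 - (Q *m y) k 0 = - c k 0 * \sum_j w j * y j 0.
Proof.
rewrite mxE -sumrB mulr_sumr; apply: eq_bigr => j _.
rewrite -mulrBl mulrA; congr (_ * _); rewrite QmatE /pivexp.
case: (ltnP k j) => hkj.
  have /negPf -> : k != j by rewrite -val_eqE neq_ltn hkj.
  rewrite ifF; last by apply/negbTE; rewrite -leqNgt ltnW.
  rewrite mulrNz intr_divz; last by apply/dvdz_mull; exact: ecoef_dvd_eprime.
  by rewrite coefE !rmorphM /=; ring.
case: eqP => [->|hne]; first by rewrite -(diag_bezout c j); ring.
rewrite ifT; first by ring.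
by rewrite ltn_neqAle hkj andbT; apply/eqP => h; apply: hne; apply: val_inj.
Qed.

End LinearForm.

Lemma invmx_mul (R : comUnitRingType) n (A B : 'M[R]_n) :
  A \in unitmx -> B \in unitmx -> invmx (A *m B) = invmx B *m invmx A.
Proof.
move=> hA hB.
have h : invmx B *m invmx A *m (A *m B) = 1%:M.
  by rewrite mulmxA -(mulmxA (invmx B)) mulVmx // mulmx1 mulVmx.
by rewrite -[LHS]mul1mx -h -mulmxA mulmxV ?mulmx1 // unitmx_mul hA hB.
Qed.

(* The bases iota_{i,.}: the columns of Cmat g i are their coordinates in iota_{0,.}.
   Their Z-span is Gamma_{i-1} = Gamma_{-1} + <gamma_0, ..., gamma_{i-1}>. *)
Section BasisChain.
Variables (n : nat) (g : nat -> 'cV[rat]_n).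

Lemma Cmat_unit i : Cmat g i \in unitmx.
Proof. by elim: i => [|i IH] /=; rewrite ?unitmx1 // unitmx_mul IH Qmat_unit. Qed.

Lemma CmatS_inv i : invmx (Cmat g i.+1) = invmx (Qmat (gcoord g i)) *m invmx (Cmat g i).
Proof. by rewrite invmx_mul ?Cmat_unit ?Qmat_unit. Qed.

Lemma coords_int i (a : 'I_n -> int) (b : nat -> int) :
  invmx (Cmat g i) *m (\col_k (a k)%:~R + \sum_(k < i) g k *~ b k)
    \is a mxOver Num.int.
Proof.
elim: i b => [|i IH] b.
  by rewrite invmx1 mul1mx big_ord0 addr0; apply/mxOverP => x y; rewrite mxE intr_int.
rewrite CmatS_inv big_ord_recr /= addrA mulmxDr -!mulmxA; apply: int_mxD.
  by apply: mxOverM; [exact: invQ_int | exact: IH].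
by rewrite !raddfMz; apply: int_mxMz; exact: invQ_coef_int.
Qed.

Lemma int_coords_span i (z : 'cV[rat]_n) : z \is a mxOver Num.int ->
  exists (a : 'I_n -> int) (b : nat -> int),
    Cmat g i *m z = \col_k (a k)%:~R + \sum_(k < i) g k *~ b k.
Proof.
elim: i z => [|i IH] z hz /=.
  exists (fun k => numq (z k 0)), (fun _ => 0).
  rewrite mul1mx big_ord0 addr0; apply/matrixP => x y; rewrite mxE (ord1 y) numqK //.
  by move/mxOverP: hz.
rewrite -mulmxA -/(gcoord g i).
have [u hu ->] := Qmat_int_decomp (gcoord g i) hz.
set t := \sum_j _; have ht : t \is a Num.int.
  by apply: rpred_sum => j _; rewrite rpredM ?intr_int //; move/mxOverP: hz.
rewrite mulmxDr -scalemxAr mulKVmx ?Cmat_unit //.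
have [a [b ->]] := IH u hu.
exists a, (fun k => if k == i then numq t else b k).
rewrite big_ord_recr /= eqxx -addrA -[t in t *: _](numqK ht) scaler_int.
by congr (_ + (_ + _)); apply: eq_bigr => k _; rewrite ltn_eqF.
Qed.

End BasisChain.

Section Realization.
Variables (V : lmodType rat) (n : nat) (iota0 : 'I_n -> V).

Definition realize (v : 'cV[rat]_n) : V := \sum_j v j 0 *: iota0 j.

Fact realize_is_linear : linear realize.
Proof.
move=> a u v; rewrite /realize scaler_sumr -big_split.
by apply: eq_bigr => j _; rewrite !mxE scalerDl scalerA.
Qed.

HB.instance Definition _ :=
  GRing.isLinear.Build rat 'cV[rat]_n V *:%R realize realize_is_linear.

Lemma realize_col (a : 'I_n -> int) : realize (\col_k (a k)%:~R) = \sum_j iota0 j *~ a j.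
Proof. by apply: eq_bigr => j _; rewrite mxE scaler_int. Qed.

Lemma realize_span (g : nat -> 'cV[rat]_n) i (a : 'I_n -> int) (b : nat -> int) :
  realize (\col_k (a k)%:~R + \sum_(k < i) g k *~ b k) =
  \sum_j iota0 j *~ a j + \sum_(k < i) realize (g k) *~ b k.
Proof.
rewrite raddfD /= realize_col raddf_sum; congr (_ + _).
by apply: eq_bigr => k _; exact: raddfMz.
Qed.

(* iota_{0,.} is Z-free, hence Q-free: realize is injective *)
Lemma realize_eq0 : (forall a : 'I_n -> int, \sum_j iota0 j *~ a j = 0 -> forall j, a j = 0) ->
  forall v, realize v = 0 -> v = 0.
Proof.
move=> free_iota v hv; set D := \prod_j denq (v j 0).
have hD : (D%:~R : rat) != 0 by rewrite intr_eq0; apply/prodf_neq0 => j _; exact: denq_neq0.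
have Dv_int j : D%:~R * v j 0 \is a Num.int.
  by rewrite /D (bigD1 j) //= rmorphM mulrC mulrA -numqE -rmorphM intr_int.
have Dv : \col_k ((numq (D%:~R * v k 0))%:~R : rat) = D%:~R *: v.
  by apply/matrixP => x y; rewrite !mxE (ord1 y) numqK.
have /free_iota num0 : \sum_j iota0 j *~ numq (D%:~R * v j 0) = 0.
  by rewrite -realize_col Dv linearZ /= hv scaler0.
apply/matrixP => x y; rewrite (ord1 y) mxE.
have := congr1 (fun z : int => (z%:~R : rat)) (num0 x); rewrite numqK //= => /eqP.
by rewrite mulf_eq0 (negbTE hD) => /eqP.
Qed.

End Realization.

Lemma denq_dvd (k : int) (x : rat) : (k%:~R * x) \is a Num.int -> (denq x %| k)%Z.
Proof.
move=> hx; have hkx : k * numq x = numq (k%:~R * x) * denq x.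
  by apply: (@intr_inj rat); rewrite !rmorphM /= [(numq (_ * _))%:~R]numqK // numqE; ring.
have : (denq x %| k * numq x)%Z by rewrite hkx dvdz_mull.
rewrite Gauss_dvdzl //.
by rewrite /coprimez gcdzC; have := coprime_num_den x; rewrite /coprime.
Qed.

(* The order e_i of gamma_i modulo Gamma_{mu_{i-1}} is e'_n, the lcm of the
   denominators of the coordinates c of gamma_i in iota_{i,.}. *)
Section Order.
Variables (V : lmodType rat) (Gam : {pred V}) (n : nat) (iota0 : 'I_n -> V).
Variable (g : nat -> 'cV[rat]_n).
Hypothesis Gam0 : 0 \in Gam.
Hypothesis GamB : {in Gam &, forall x y, x - y \in Gam}.
Hypothesis iota_in_Gam : forall j, iota0 j \in Gam.
Hypothesis free_iota :
  forall a : 'I_n -> int, \sum_j iota0 j *~ a j = 0 -> forall j, a j = 0.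

Local Notation gam i := (realize iota0 (g i)).

Lemma Gam_zcomb (a : 'I_n -> int) : \sum_j iota0 j *~ a j \in Gam.
Proof.
have GamN x : x \in Gam -> - x \in Gam by move=> hx; rewrite -sub0r GamB.
have GamD x y : x \in Gam -> y \in Gam -> x + y \in Gam.
  by move=> hx hy; rewrite -[y]opprK GamB // GamN.
have GamMn x m : x \in Gam -> x *+ m \in Gam.
  by move=> hx; elim: m => [|m IH]; rewrite ?mulr0n // mulrS GamD.
apply: (big_ind (fun x => x \in Gam)) => // j _.
by case: (a j) => m /=; [exact: GamMn | apply: GamN; exact: GamMn].
Qed.

Lemma lcm_den_dvd i (e : nat) :
  (exists (a : 'I_n -> int) (b : nat -> int),
      gam i *+ e = \sum_j iota0 j *~ a j + \sum_(k < i) gam k *~ b k) ->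
  (lcm_den (gcoord g i) n %| e)%N.
Proof.
move=> [a [b hab]]; set c := gcoord g i.
have eg : e%:R *: g i = \col_k (a k)%:~R + \sum_(k < i) g k *~ b k.
  apply/eqP; rewrite -subr_eq0; apply/eqP; apply: (realize_eq0 free_iota).
  by rewrite linearB linearZ /= realize_span scaler_nat hab subrr.
have ec_int : e%:R *: c \is a mxOver Num.int.
  by rewrite /c /gcoord scalemxAr eg; exact: coords_int.
apply: lcm_den_min => m hm; move: (ecn_ord c (Ordinal hm)) => /= ->.
apply: (@denq_dvd e%:Z (c (Ordinal hm) 0)).
by move/mxOverP: ec_int => /(_ (Ordinal hm) 0); rewrite mxE.
Qed.

(* conversely e'_n c is integral, so e'_n gamma_i lies in Gamma_{mu_{i-1}} *)
Lemma lcm_den_in_GammaMu i :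
  inGammaMu Gam (fun k => gam k) i (gam i *+ lcm_den (gcoord g i) n).
Proof.
set c := gcoord g i; set N := lcm_den c n.
have Nc_int : (N%:R : rat) *: c \is a mxOver Num.int.
  apply/mxOverP => m y; rewrite (ord1 y) mxE coefE mulrA -[N%:R]/((N%:Z)%:~R : rat).
  rewrite -rmorphM /=; apply/Qint_dvdz/dvdz_mulr.
  by rewrite -eprime_lcm; exact: ecoef_dvd_eprime.
have [a [b hab]] := int_coords_span g i Nc_int.
rewrite -scalemxAr /c /gcoord mulKVmx ?Cmat_unit // in hab.
exists (\sum_j iota0 j *~ a j); first exact: Gam_zcomb.
by exists b; rewrite -scaler_nat -linearZ /= hab realize_span.
Qed.

Lemma order_eq_eprime i (e : nat) : (0 < e)%N ->
  (forall k, (0 < k < e)%N -> ~ inGammaMu Gam (fun k => gam k) i (gam i *+ k)) ->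
  (exists (a : 'I_n -> int) (b : nat -> int),
      gam i *+ e = \sum_j iota0 j *~ a j + \sum_(k < i) gam k *~ b k) ->
  e%:Z = eprime (gcoord g i) n.
Proof.
move=> e_gt0 e_min /lcm_den_dvd N_dvd_e; rewrite eprime_lcm; congr Posz.
have := dvdn_leq e_gt0 N_dvd_e; rewrite leq_eqVlt => /orP[/eqP //|N_lt_e].
by case: (e_min _ _ (lcm_den_in_GammaMu i)); rewrite lcm_den_gt0.
Qed.

End Order.

Section IntegerPowers.
Variables (F : fieldType) (I : finType).

Lemma prodXz (a : I -> F) (z : int) : (\prod_k a k) ^ z = \prod_k a k ^ z.
Proof.
apply: (big_ind2 (fun x y => x ^ z = y)) => [|x1 x2 y1 y2 <- <-|k _] //.
  by rewrite exp1rz.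
by rewrite expfzMl.
Qed.

Lemma prod_expz_sum (x : F) (z : I -> int) : x != 0 -> \prod_k x ^ z k = x ^ (\sum_k z k).
Proof.
move=> hx; apply: (big_ind2 (fun u s => u = x ^ s)) => [|x1 x2 y1 y2 -> ->|k _] //.
by rewrite expfzDr.
Qed.

Lemma prod_expzD (a : I -> F) (z1 z2 : I -> int) : (forall k, a k != 0) ->
  \prod_k a k ^ z1 k * \prod_k a k ^ z2 k = \prod_k a k ^ (z1 k + z2 k).
Proof. by move=> ha; rewrite -big_split; apply: eq_bigr => k _; rewrite expfzDr. Qed.

End IntegerPowers.

Lemma monomial_ratio (F : fieldType) n (Phi : F) (p : 'I_n -> F) (w : 'I_n -> int)
    (M : 'I_n -> 'I_n -> int) (X Y Z : 'I_n -> int) (E L : int) :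
  Phi != 0 -> (forall k, p k != 0) ->
  \sum_j w j * Y j = E * L ->
  (forall k, \sum_j M k j * Y j - X k = Z k * L) ->
  (\prod_j (Phi ^ w j * \prod_k p k ^ M k j) ^ Y j) / (\prod_k p k ^ X k)
   = (Phi ^ E * \prod_k p k ^ Z k) ^ L.
Proof.
move=> hPhi hp expPhi expp.
have -> : \prod_j (Phi ^ w j * \prod_k p k ^ M k j) ^ Y j =
          \prod_j (Phi ^ (w j * Y j) * \prod_k p k ^ (M k j * Y j)).
  apply: eq_bigr => j _; rewrite expfzMl exprz_exp prodXz; congr (_ * _).
  by apply: eq_bigr => k _; rewrite exprz_exp.
rewrite big_split /= prod_expz_sum // expPhi exchange_big /=.
have -> : \prod_k \prod_j p k ^ (M k j * Y j) = \prod_k p k ^ (\sum_j M k j * Y j).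
  by apply: eq_bigr => k _; rewrite prod_expz_sum.
rewrite -mulrA -prodfV.
have -> : \prod_k (p k ^ X k)^-1 = \prod_k p k ^ (- X k).
  by apply: eq_bigr => k _; rewrite invr_expz.
rewrite prod_expzD // expfzMl exprz_exp prodXz; congr (_ * _).
by apply: eq_bigr => k _; rewrite expp exprz_exp.
Qed.

Section PiChain.
Variables (K : fieldType) (n : nat) (g : nat -> 'cV[rat]_n).
Variables (phi : nat -> {poly K}) (pi0 : 'I_n -> K).
Local Notation piv := (piv g phi pi0).

Lemma piv_neq0 i j : (forall k, (k < i)%N -> phi k != 0) -> (forall j, pi0 j != 0) ->
  piv i j != 0.
Proof.
elim: i j => [|i IH] j phi_neq0 pi0_neq0 /=; first by rewrite tofrac_eq0 polyC_eq0.
have piv_i k : piv i k != 0 by apply: IH => // m hm; apply/phi_neq0/ltnW.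
rewrite !mulf_neq0 ?expfz_neq0 ?tofrac_eq0 ?phi_neq0 //.
by apply/prodf_neq0 => k _; rewrite expfz_neq0.
Qed.

Lemma piv_succ i j :
  piv i.+1 j = toK (phi i) ^ (ellcoef (gcoord g i) j * epcoef (gcoord g i) j)
               * \prod_k piv i k ^ pivexp (gcoord g i) k j.
Proof.
rewrite /= -mulrA; congr (_ * _); set c := gcoord g i.
rewrite [RHS](bigD1 j) //= {1}/pivexp ltnn eqxx [RHS]mulrC; congr (_ * _).
rewrite big_mkcond [RHS]big_mkcond; apply: eq_bigr => k _ /=.
case: ltnP => hkj; first by rewrite /pivexp hkj; have /negPf -> : k != j by
  rewrite -val_eqE neq_ltn hkj.
by case: eqP => [//|/eqP hne]; rewrite /pivexp ltnNge hkj /= (negPf hne) expr0z.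
Qed.

Lemma level_ratio i (e : nat) (x : 'cV[rat]_n) :
  let c := gcoord g i in
  toK (phi i) != 0 -> (forall k, piv i k != 0) -> e%:Z = eprime c n ->
  x \is a mxOver Num.int ->
  piexp (piv i.+1) (invmx (Qmat c) *m x) / piexp (piv i) x
   = (toK (phi i) ^+ e * piexp (piv i) (- (e%:R *: c))) ^ numq (Lform c x).
Proof.
move=> c phi_neq0 piv_i_neq0 e_eq x_int; have L_int := Lform_int c x_int.
set y := invmx (Qmat c) *m x.
have /mxOverP y_int : y \is a mxOver Num.int by apply: mxOverM; [exact: invQ_int|].
have x_Qy : x = Qmat c *m y by rewrite /y mulKVmx ?Qmat_unit.
move/mxOverP: x_int => x_int.
have z_int k : (- (e%:R *: c)) k 0 \is a Num.int.
  rewrite 2!mxE rpredN -[e%:R]/((e%:Z)%:~R : rat) e_eq coefE mulrA -rmorphM.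
  by apply/Qint_dvdz/dvdz_mulr; exact: ecoef_dvd_eprime.
have exp_phi : \sum_j (ellcoef c j * epcoef c j) * numq (y j 0) = e%:Z * numq (Lform c x).
  apply: (@intr_inj rat); rewrite rmorph_sum /= intrM numqK // e_eq x_Qy.
  rewrite -(weight_sum_Lform c y); apply: eq_bigr => j _; by rewrite intrM numqK.
have exp_piv k : \sum_j pivexp c k j * numq (y j 0) - numq (x k 0) =
                 numq ((- (e%:R *: c)) k 0) * numq (Lform c x).
  apply: (@intr_inj rat); rewrite rmorphB rmorph_sum /= intrM !numqK //.
  under eq_bigr => j _ do rewrite intrM numqK //.
  rewrite [in LHS]x_Qy (exponent_defect c y) (weight_sum_Lform c y) -x_Qy 2![in RHS]mxE.
  by rewrite -[e%:R]/((e%:Z)%:~R : rat) e_eq; ring.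
rewrite /piexp -(monomial_ratio phi_neq0 piv_i_neq0 exp_phi exp_piv).
by congr (_ / _); apply: eq_bigr => j _; rewrite piv_succ.
Qed.

End PiChain.

Theorem mainTheorem7 (K : fieldType) (V : lmodType rat) (Gam : {pred V}) (n r : nat)
    (iota0 : 'I_n -> V) (g : nat -> 'cV[rat]_n) (e : nat -> nat)
    (phi : nat -> {poly K}) (pi0 : 'I_n -> K) :
  (* Gamma is a non-trivial subgroup of V, and V = Gamma (x) Q *)
  0 \in Gam ->
  {in Gam &, forall x y, x - y \in Gam} ->
  (exists2 x, x \in Gam & x != 0) ->
  (forall x : V, exists2 k, (0 < k)%N & x *+ k \in Gam) ->
  (* iota0 is a Z-basis of a subgroup Gamma_{-1} of Gamma *)
  (forall j, iota0 j \in Gam) ->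
  (forall a : 'I_n -> int, \sum_j iota0 j *~ a j = 0 -> forall j, a j = 0) ->
  let gam := fun i => \sum_j g i j 0 *: iota0 j in
  (* e_i = (Gamma_{mu_i} : Gamma_{mu_{i-1}}) = order of gamma_i modulo Gamma_{mu_{i-1}} *)
  (forall i, (i <= r)%N ->
     [/\ (0 < e i)%N, inGammaMu Gam gam i (gam i *+ e i)
       & forall k, (0 < k < e i)%N -> ~ inGammaMu Gam gam i (gam i *+ k)]) ->
  (* h_i in Gamma_{-1} + <gamma_0, ..., gamma_{i-1}> *)
  (forall i, (i <= r)%N -> exists (a : 'I_n -> int) (b : nat -> int),
       gam i *+ e i = \sum_j iota0 j *~ a j + \sum_(k < i) gam k *~ b k) ->
  (* key polynomials are monic; pi_{0,j} in K^* *)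
  (forall i, (i <= r)%N -> phi i \is monic) ->
  (forall j, pi0 j != 0) ->
  forall i, (i <= r)%N ->
  forall (a : 'I_n -> int) (b : nat -> int),
    (* beta = sum_j a_j iota_{0,j} + sum_{k<i} b_k gamma_k, an arbitrary element of Gamma_{i-1},
       written in coordinates w.r.t. iota_0 *)
    let beta : 'cV[rat]_n := (\col_k (a k)%:~R) + \sum_(k < i) g k *~ b k in
    Lval g i beta \is a Num.int /\
    piPow g phi pi0 i.+1 beta / piPow g phi pi0 i beta
      = Yi g phi pi0 e i ^ numq (Lval g i beta).
Proof.
move=> Gam0 GamB _ _ iota_in_Gam free_iota gam order_e h_in phi_monic pi0_neq0
  i le_ir a b beta.
have [e_gt0 _ e_min] := order_e i le_ir.
have e_eq : (e i)%:Z = eprime (gcoord g i) n.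
  exact: (order_eq_eprime Gam0 GamB iota_in_Gam free_iota e_gt0 e_min (h_in i le_ir)).
have x_int : invmx (Cmat g i) *m beta \is a mxOver Num.int by exact: coords_int.
have phi_neq0 k : (k <= r)%N -> phi k != 0 by move/phi_monic/monic_neq0.
have piv_i_neq0 k : piv g phi pi0 i k != 0.
  by apply: piv_neq0 => // m /ltnW /leq_trans /(_ le_ir); exact: phi_neq0.
split; first exact: Lform_int.
rewrite /Yi /piPow CmatS_inv -mulmxA mulmxN -scalemxAr.
by apply: level_ratio; rewrite ?tofrac_eq0 ?phi_neq0.
Qed.
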